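(* Assume the setting described in the context. Suppose Assumption (A1) holds, let $c=c_1/2$ where $c_1$ is the constant in the lower bound $d_{G^n}(x,y)\ge c_1\alpha(n)d_E(x,y)$ of (A1)(a), and assume that $(F,d_F)$ satisfies the midpoint property. If $r>0$, then there exists an integer $n_0$ such that \[\inf_{x\in F\setminus B_F(\rho,r)}d_{G^n}(\rho,g_n(x))\geq c\alpha(n) r\] for every $n\geq n_0$.
   Context: Let $(E,d_E)$ be a metric space and $F\subseteq E$ such that $F\cap\overline{B}_E(x,r)$ is compact for all $x\in E$, $r>0$ ($\overline{B}_E$, $B_E$ closed and open balls in $E$). Let $d_F:=d_E|_{F\times F}$, $B_F(x,r)$ the open ball in $(F,d_F)$, $\rho\in F$, $\nu$ a Radon measure of full support on $(F,d_F)$ (extended to $E$ by $\nu(A):=\nu(A\cap F)$), and $(q_t(x))_{x\in F,t>0}$ jointly continuous in $(t,x)$ with $q_t\ge0$, $\int_Fq_t\,d\nu=1$ for each $t>0$. The midpoint property: for all $x,y\in F$ there is $z\in F$ with $d_F(x,z)=\frac12d_F(x,y)=d_F(z,y)$. For a locally finite connected graph $G$ with at least two vertices: $d_G$ is the shortest-path metric; $\mu^G$ a symmetric weight with $\mu^G_{xy}>0$ iff $\{x,y\}$ is an edge; $\nu^G(A):=\sum_{x\in A}\sum_y\mu^G_{xy}$; $X^G$ the discrete time simple random walk with $P_G(x,y)=\mu^G_{xy}/\sum_z\mu^G_{xz}$, law $\mathbf{P}^G_x$. $(G^n)_{n\ge1}$ are such graphs with $V(G^n)\subseteq E$ and distinguished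 vertex $\rho$; write $\nu^n:=\nu^{G^n}$, $X^n:=X^{G^n}$. $(\alpha(n)),(\beta(n)),(\gamma(n))$ are non-negative sequences diverging to $\infty$. For $x\in E$, $g_n(x)$ is a point of $V(G^n)$ minimising $d_E(x,\cdot)$ over $V(G^n)$. Assumption (A1): (a) there is $c_1>0$ with $d_{G^n}(x,y)\ge c_1\alpha(n)d_E(x,y)$ for all $x,y\in V(G^n)$, $n\ge1$; and a non-negative $\tilde\alpha(n)=o(\alpha(n))$ such that for each $r>0$ there exist $c_2<\infty$, $n_0$ with $d_{G^n}(x,y)\le c_2\alpha(n)d_E(x,y)+\tilde\alpha(n)$ for all $x,y\in V(G^n)\cap B_E(\rho,r)$, $n\ge n_0$. (b) For each $r>0$, $\lim_n\sup_{x\in B_F(\rho,r)}d_E(x,V(G^n))=0$. (c) For every $x\in F$, $r>0$, $\lim_n\beta(n)^{-1}\nu^n(B_E(x,r))=\nu(B_E(x,r))$. (d) For every compact interval $I\subset(0,\infty)$, $x\in F$, $r>0$, $\lim_n\mathbf{P}^{G^n}_\rho(X^n_{\lfloor\gamma(n)t\rfloor}\in B_E(x,r))=\int_{B_F(x,r)}q_t(y)\nu(dy)$ uniformly for $t\in I$. *)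

From HB Require Import structures.
From mathcomp Require Import all_boot all_order all_algebra.
From mathcomp Require Import all_classical all_reals all_analysis.
Set Implicit Arguments. Unset Strict Implicit. Unset Printing Implicit Defensive.
Import Order.TTheory GRing.Theory Num.Theory.
Import numFieldNormedType.Exports.
Local Open Scope classical_set_scope.
Local Open Scope ring_scope.

Section MetricDefs.
Variables (R : realType) (E : Type) (d : E -> E -> R).

Definition is_metric : Prop :=
  [/\ forall x y, 0 <= d x y,
      forall x y, d x y = 0 <-> x = y,
      forall x y, d x y = d y x &
      forall x y z, d x z <= d x y + d y z].

Definition oball (x : E) (r : R) : set E := [set y | d x y < r].
Definition cball (x : E) (r : R) : set E := [set y | d x y <= r].

Definition d_open (U : set E) : Prop :=
  forall x, U x -> exists2 e : R, 0 < e & oball x e `<=` U.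

Definition d_compact (K : set E) : Prop :=
  forall (I : Type) (U : I -> set E), (forall i, d_open (U i)) ->
    K `<=` \bigcup_i U i ->
    exists2 J : set I, finite_set J & K `<=` \bigcup_(i in J) U i.

Definition dist_set (x : E) (A : set E) : R := inf [set d x y | y in A].

Definition midpoint_property (F : set E) : Prop :=
  forall x y, F x -> F y ->
    exists2 z, F z & d x z = d x y / 2 /\ d z y = d x y / 2.
End MetricDefs.

Section GraphDefs.
Variables (R : realType) (E : choiceType).
(* A weighted graph: vertex set V, symmetric weights mu; {x,y} is an edge
   iff mu x y > 0 (for x, y in V). *)
Variables (V : set E) (mu : E -> E -> R).

Definition adj (x y : E) : Prop := V x /\ V y /\ 0 < mu x y.

Fixpoint path_len (k : nat) (x y : E) : Prop :=
  match k with
  | 0%N => V x /\ x = y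
  | k'.+1 => exists2 z, adj x z & path_len k' z y
  end.

Definition gdist (x y : E) : R := inf [set k%:R | k in [set k | path_len k x y]].

Definition is_weighted_graph : Prop :=
  (forall x y, V x -> V y -> mu x y = mu y x) /\
  (forall x y, V x -> V y -> 0 <= mu x y) /\
  (forall x, V x -> mu x x = 0) /\
  (forall x, V x -> finite_set [set y | adj x y]) /\
  (forall x y, V x -> V y -> exists k, path_len k x y) /\
  (exists x y, [/\ V x, V y & x <> y]).

Definition wdeg (x : E) : R := (\sum_(y \in [set y | adj x y]) mu x y)%R.

Definition gmeasure (A : set E) : \bar R :=
  (\esum_(x in A `&` V) (wdeg x)%:E)%E.

Definition trans (x y : E) : R := mu x y / wdeg x.

(* P^G_x (X^G_k \in B) for the discrete time simple random walk *)
Fixpoint walk_prob (k : nat) (x : E) (B : set E) : R :=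
  match k with
  | 0%N => \1_B x
  | k'.+1 => (\sum_(z \in [set z | adj x z]) trans x z * walk_prob k' z B)%R
  end.
End GraphDefs.

Section MeasureDefs.
Local Open Scope ereal_scope.
Variables (R : realType) (dE : measure_display) (E : measurableType dE).
Variables (d : E -> E -> R) (F : set E) (nu : {measure set E -> \bar R}).

(* nu is a Radon measure on (F, d_F), extended to E by nu(A) = nu(A \cap F),
   with full support on F *)
Definition radon_full_support_on : Prop :=
  [/\ (forall A, measurable A -> nu A = nu (A `&` F)),
      (forall x, F x -> exists2 r : R, (0 < r)%R & nu (oball d x r) < +oo),
      (forall A, measurable A ->
          nu A = ereal_inf [set nu U | U in [set U | d_open d U /\ A `&` F `<=` U]]),
      (forall U, d_open d U ->
          nu U = ereal_sup [set nu K | K in [set K | d_compact d K /\ K `<=` U `&` F]])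
    & (forall x r, F x -> (0 < r)%R -> 0 < nu (oball d x r))].
End MeasureDefs.

From HB Require Import structures.
From mathcomp Require Import all_boot all_order all_algebra.
From mathcomp Require Import all_classical all_reals all_analysis.
From mathcomp Require Import ring lra.
Import Order.TTheory GRing.Theory Num.Theory.
Import numFieldNormedType.Exports.
Local Open Scope classical_set_scope.
Local Open Scope ring_scope.

(* Halving the segment from rho to a far point x by repeated midpoints gives a
   point y of F with r <= d(rho, y) < 2r lying "between" rho and x.  Since the
   graph approximates F within distance r/4 near rho, some vertex v is close
   to y, so the nearest vertex g_n(x) is no closer to x than v is; the
   triangle inequality then keeps g_n(x) at distance >= r/2 from rho, and the
   lower bound of (A1)(a) turns this into graph distance >= c1 alpha(n) r / 2. *)

Section MetricFacts.
Context {R : realType} {E : Type} {d : E -> E -> R}.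
Hypothesis hd : is_metric d.

Lemma metric_ge0 x y : 0 <= d x y.
Proof. by case: hd. Qed.

Lemma metric_xx x : d x x = 0.
Proof. by case: hd => _ h1 _ _; apply/h1. Qed.

Lemma metric_sym x y : d x y = d y x.
Proof. by case: hd. Qed.

Lemma metric_triangle x y z : d x z <= d x y + d y z.
Proof. by case: hd. Qed.

Lemma dist_set_ltP (A : set E) y e :
  A !=set0 -> dist_set d y A < e -> exists2 v, A v & d y v < e.
Proof.
move=> [v0 Av0] /inf_lt[]; first by exists (d y v0), v0.
by move=> _ [v Av <-] ltve; exists v.
Qed.

Section Midpoints.
Context {F : set E} {rho : E} {r : R}.
Hypotheses (hmid : midpoint_property d F) (Frho : F rho).

Lemma midpoint_shell_iter m x : F x -> r <= d rho x -> d rho x < 2 ^+ m * r ->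
  exists2 y, F y &
    [/\ r <= d rho y, d rho y < 2 * r & d y x <= d rho x - d rho y].
Proof.
elim: m x => [|m IH] x Fx rx.
  by rewrite expr0 mul1r => /(le_lt_trans rx); rewrite ltxx.
rewrite exprS -mulrA => xm.
have [x2|x2] := ltP (d rho x) (2 * r).
  by exists x => //; rewrite metric_xx subrr.
have [z Fz [dz1 dz2]] := hmid rho x Frho Fx.
have [||y Fy [y1 y2 y3]] := IH z Fz; [rewrite dz1; lra..|].
exists y => //; split => //.
by have := metric_triangle y z x; rewrite dz2; lra.
Qed.

Lemma midpoint_shell x : 0 < r -> F x -> r <= d rho x ->
  exists2 y, F y &
    [/\ r <= d rho y, d rho y < 2 * r & d y x <= d rho x - d rho y].
Proof.
move=> r_gt0 Fx rx.
apply: (midpoint_shell_iter (Num.Def.archi_bound (d rho x / r))) => //.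
have /archi_boundP := divr_ge0 (metric_ge0 rho x) (ltW r_gt0).
rewrite ltr_pdivrMr // => /lt_le_trans; apply; rewrite ler_pM2r //.
by rewrite -natrX ler_nat ltnW // ltn_expl.
Qed.

End Midpoints.

Lemma nearest_point_dist_ge {A : set E} {rho x y p v : E} :
  (forall w, A w -> d x p <= d x w) -> A v ->
  d y x <= d rho x - d rho y -> d rho y - d y v <= d rho p.
Proof.
move=> p_min Av yx.
have := p_min v Av; have := metric_triangle rho p x.
have := metric_triangle x y v; rewrite !(metric_sym x); lra.
Qed.

End MetricFacts.

Theorem lemma2p3
  (R : realType) (dE : measure_display) (E : measurableType dE)
  (d : E -> E -> R) (F : set E) (rho : E)
  (nu : {measure set E -> \bar R}) (q : R -> E -> R)
  (V : nat -> set E) (mu : nat -> E -> E -> R)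
  (alpha beta gamma : nat -> R) (g : nat -> E -> E) (c1 r : R)
  (* (E, d_E) metric space; measurable sets of E are its Borel sets *)
  (hd : is_metric d)
  (hborel : @measurable _ E = <<s [set U | d_open d U] >>)
  (* F \cap closed balls are compact *)
  (hF : forall x s, 0 < s -> d_compact d (F `&` cball d x s))
  (hrhoF : F rho)
  (* nu : Radon measure of full support on F, extended by nu(A) := nu(A \cap F) *)
  (hnu : radon_full_support_on d F nu)
  (* heat kernel q *)
  (hq_ge0 : forall t x, 0 < t -> F x -> 0 <= q t x)
  (hq_int : forall t, 0 < t -> (\int[nu]_(y in F) (q t y)%:E = 1)%E)
  (hq_cont : forall t x, 0 < t -> F x -> forall e, 0 < e ->
      exists2 del, 0 < del & forall s y, 0 < s -> F y ->
        `|s - t| < del -> d x y < del -> `|q s y - q t x| < e)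
  (* the graphs G^n, with V(G^n) \subseteq E and distinguished vertex rho *)
  (hG : forall n, is_weighted_graph (V n) (mu n))
  (hrhoV : forall n, V n rho)
  (* scaling sequences: non-negative and diverging *)
  (halpha0 : forall n, 0 <= alpha n) (hbeta0 : forall n, 0 <= beta n)
  (hgamma0 : forall n, 0 <= gamma n)
  (halpha : alpha @ \oo --> +oo) (hbeta : beta @ \oo --> +oo)
  (hgamma : gamma @ \oo --> +oo)
  (* g_n(x) : a closest point to x in V(G^n) *)
  (hgV : forall n x, V n (g n x))
  (hgmin : forall n x y, V n y -> d x (g n x) <= d x y)
  (* Assumption (A1)(a) *)
  (hc1 : 0 < c1)
  (hA1a_low : forall n x y, V n x -> V n y ->
      c1 * alpha n * d x y <= gdist (V n) (mu n) x y)
  (hA1a_up : exists2 alt : nat -> R, (forall n, 0 <= alt n) &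
      (alt =o_\oo alpha) /\
      forall s, 0 < s -> exists c2 : R, exists n0 : nat, forall n, (n0 <= n)%N ->
        forall x y, V n x -> V n y -> oball d rho s x -> oball d rho s y ->
          gdist (V n) (mu n) x y <= c2 * alpha n * d x y + alt n)
  (* Assumption (A1)(b) *)
  (hA1b : forall s, 0 < s -> forall e, 0 < e -> \forall n \near \oo,
      forall x, F x -> d rho x < s -> dist_set d x (V n) <= e)
  (* Assumption (A1)(c) *)
  (hA1c : forall x s, F x -> 0 < s ->
      (fun n => ((beta n)^-1)%:E * gmeasure (V n) (mu n) (oball d x s))%E @ \oo
        --> nu (oball d x s))
  (* Assumption (A1)(d) *)
  (hA1d : forall a b, 0 < a -> a <= b -> forall x s, F x -> 0 < s ->
      forall e, 0 < e -> \forall n \near \oo, forall t, a <= t <= b ->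
        (`| (walk_prob (V n) (mu n) (Num.truncn (gamma n * t)) rho (oball d x s))%:E
            - \int[nu]_(y in oball d x s `&` F) (q t y)%:E | < e%:E)%E)
  (* midpoint property of (F, d_F) *)
  (hmid : midpoint_property d F)
  (hr : 0 < r) :
  exists n0 : nat, forall n, (n0 <= n)%N ->
    forall x, F x -> ~ oball d rho r x ->
      (c1 / 2) * alpha n * r <= gdist (V n) (mu n) rho (g n x).
Proof.
have r2_gt0 : 0 < 2 * r by lra.
have r4_gt0 : 0 < r / 4 by lra.
have [n0 _ near_V] := hA1b (2 * r) r2_gt0 (r / 4) r4_gt0.
exists n0 => n le_n0n x Fx x_far.
have rx : r <= d rho x by rewrite leNgt; apply/negP.
have [y Fy [ry yr2 yx]] := midpoint_shell hd hmid hrhoF x hr Fx rx.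
have [v Vv yv] : exists2 v, V n v & d y v < r / 2.
  apply: dist_set_ltP; first by exists rho.
  by apply: le_lt_trans (near_V n le_n0n y Fy yr2) _; lra.
have g_far : r / 2 <= d rho (g n x).
  by apply: le_trans (nearest_point_dist_ge hd (hgmin n x) Vv yx); lra.
apply: le_trans (hA1a_low n _ _ (hrhoV n) (hgV n x)).
have -> : c1 / 2 * alpha n * r = c1 * alpha n * (r / 2) by ring.
by rewrite ler_wpM2l // mulr_ge0 // ltW.
Qed.
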